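(* For any two density operators $\rho$ and $\sigma$ on a finite-dimensional Hilbert space, $\lim_{\alpha\to1}S_{\alpha}(\rho\|\sigma)=U(\rho\|\sigma)$.
   Context: A density operator is a positive semidefinite operator of unit trace; $\operatorname{supp}(\rho)$ is the span of eigenvectors with nonzero eigenvalues. For $\alpha>0$, $\alpha\neq1$, the quantum relative $\alpha$-entropy is $S_{\alpha}(\rho\|\sigma)=\frac{\alpha}{1-\alpha}\log\operatorname{Tr}(\rho\sigma^{\alpha-1})-\frac{1}{1-\alpha}\log\operatorname{Tr}(\rho^{\alpha})+\log\operatorname{Tr}(\sigma^{\alpha})$ if $\operatorname{supp}(\rho)\subseteq\operatorname{supp}(\sigma)$ (negative powers on the support), and $+\infty$ otherwise. Umegaki's relative entropy is $U(\rho\|\sigma)=\operatorname{Tr}(\rho\log\rho-\rho\log\sigma)$ when $\operatorname{supp}(\rho)\subseteq\operatorname{supp}(\sigma)$ and $+\infty$ otherwise. Conventions: $0\cdot(\pm\infty)=0$, $\log0=-\infty$, $\log(+\infty)=+\infty$. *)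

From HB Require Import structures.
From mathcomp Require Import all_boot all_order all_algebra.
From mathcomp Require Import all_classical all_reals all_analysis.
From mathcomp Require Import complex.
Set Implicit Arguments. Unset Strict Implicit. Unset Printing Implicit Defensive.
Import Order.TTheory GRing.Theory Num.Theory.
Import numFieldNormedType.Exports.
Local Open Scope ring_scope.

Section Quantum.
Variable R : realType.
Local Notation C := R[i].

Definition adj n m (A : 'M[C]_(n, m)) : 'M[C]_(m, n) := (map_mx conjc A)^T.

Definition density n (A : 'M[C]_n) : Prop :=
  [/\ adj A = A,
      (forall v : 'cV[C]_n, 0 <= (adj v *m A *m v) 0 0)
    & \tr A = 1].

Definition eigdec n (A : 'M[C]_n) (Ud : 'M[C]_n * 'rV[R]_n) : Prop :=
  Ud.1 *m adj Ud.1 = 1%:M /\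
  A = Ud.1 *m diag_mx (map_mx (fun x => x%:C%C) Ud.2) *m adj Ud.1.

(* functional calculus f(A) for a Hermitian matrix, via a chosen unitary
   diagonalisation (the result does not depend on the choice) *)
Definition mfun n (f : R -> R) (A : 'M[C]_n) : 'M[C]_n :=
  match pselect (exists Ud, eigdec A Ud) with
  | left h => let Ud := projT1 (cid h) in
      Ud.1 *m diag_mx (map_mx (fun x => (f x)%:C%C) Ud.2) *m adj Ud.1
  | right _ => 0
  end.

Definition mpow n (t : R) (A : 'M[C]_n) : 'M[C]_n :=
  mfun (fun x => if 0 < x then x `^ t else 0) A.

(* log A on the support (0 on the kernel; only used where this is harmless) *)
Definition mlog n (A : 'M[C]_n) : 'M[C]_n :=
  mfun (fun x => if 0 < x then ln x else 0) A.

Definition trR n (A : 'M[C]_n) : R := complex.Re (\tr A).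

(* supp(rho) ⊆ supp(sigma): for Hermitian matrices the support is the
   column/row space *)
Definition supp_incl n (rho sigma : 'M[C]_n) : bool := (rho <= sigma)%MS.

Definition Salpha n (a : R) (rho sigma : 'M[C]_n) : \bar R :=
  if supp_incl rho sigma then
    ((a / (1 - a)) * ln (trR (rho *m mpow (a - 1) sigma))
     - (1 - a)^-1 * ln (trR (mpow a rho))
     + ln (trR (mpow a sigma)))%:E
  else +oo%E.

Definition Umegaki n (rho sigma : 'M[C]_n) : \bar R :=
  if supp_incl rho sigma then
    (trR (rho *m mlog rho - rho *m mlog sigma))%:E
  else +oo%E.

End Quantum.

(* Diagonalise rho = U diag(d) U^* and sigma = V diag(e) V^*, and let
   w_j = (V^* rho V)_jj, a probability vector with w_j = 0 wherever e_j = 0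
   (this is supp rho <= supp sigma).  Then
     S_a(rho||sigma) = a/(1-a) ln G(a) - 1/(1-a) ln F(a) + ln H(a)
   with F(a) = sum_i d_i^a, G(a) = sum_j w_j e_j^(a-1), H(a) = sum_j e_j^a.
   All three power sums equal 1 at a = 1, so the first two terms are, up to
   sign and the factor a, difference quotients of ln F and ln G at 1.  They
   converge to F'(1) - G'(1) = sum_i d_i ln d_i - sum_j w_j ln e_j, which is
   Tr rho ln rho - Tr rho ln sigma. *)
From Pilot Require Import Defs.
From HB Require Import structures.
From mathcomp Require Import all_boot all_order all_algebra.
From mathcomp Require Import all_classical all_reals all_analysis.
From mathcomp Require Import complex.
From mathcomp Require Import spectral sesquilinear ring.
Import Order.TTheory GRing.Theory Num.Theory.
Import numFieldNormedType.Exports.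
Set Implicit Arguments. Unset Strict Implicit. Unset Printing Implicit Defensive.
Local Open Scope ring_scope.

Section SpectralCalculus.
Variable R : realType.
Local Notation C := R[i].
Local Notation Re := (@complex.Re R : Rcomplex R -> R).

Definition psdmx n (A : 'M[C]_n) : Prop :=
  forall v : 'cV[C]_n, 0 <= (adj v *m A *m v) 0 0.

Definition diagf n (f : R -> R) (d : 'rV[R]_n) : 'M[C]_n :=
  diag_mx (map_mx (fun x => (f x)%:C%C) d).

Lemma adj_sesqui n m (A : 'M[C]_(n, m)) : adj A = (A ^t*)%sesqui.
Proof. by rewrite /adj map_trmx. Qed.

Lemma adjM n m p (A : 'M[C]_(n, m)) (B : 'M[C]_(m, p)) :
  adj (A *m B) = adj B *m adj A.
Proof. by rewrite /adj map_mxM trmx_mul. Qed.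

Lemma adjK n m (A : 'M[C]_(n, m)) : adj (adj A) = A.
Proof. by apply/matrixP => i j; rewrite /adj !mxE conjcK. Qed.

Lemma Re_mulr_real (z : C) (x : R) : complex.Re (z * x%:C%C) = complex.Re z * x.
Proof. by case: z => a b /=; rewrite mulr0 subr0. Qed.

Lemma trR_sub n (A B : 'M[C]_n) : trR (A - B) = trR A - trR B.
Proof. by rewrite /trR linearB; exact: (raddfB Re). Qed.

Lemma mfun_eigdec n (A : 'M[C]_n) : (exists Ud, eigdec A Ud) ->
  exists Ud, eigdec A Ud /\
    forall f, Defs.mfun f A = Ud.1 *m diagf f Ud.2 *m adj Ud.1.
Proof.
move=> ex; rewrite /Defs.mfun; case: pselect => [h|//].
by exists (projT1 (cid h)); split => //; exact: projT2 (cid h).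
Qed.

Lemma eigdec_conj n (A U : 'M[C]_n) d : eigdec A (U, d) ->
  adj U *m A *m U = diagf id d.
Proof.
move=> [/= UU ->]; have UU' := mulmx1C UU.
by rewrite !mulmxA UU' mul1mx -mulmxA UU' mulmx1.
Qed.

Lemma quad_form_delta n (M : 'M[C]_n) (j : 'I_n) :
  (adj (delta_mx j 0 : 'cV[C]_n) *m M *m (delta_mx j 0 : 'cV[C]_n)) 0 0 = M j j.
Proof.
have -> : adj (delta_mx j 0 : 'cV[C]_n) = delta_mx 0 j.
  by apply/matrixP => a b; rewrite /adj !mxE conjc_nat andbC.
by rewrite -(rowE j M) -colE !mxE.
Qed.

Lemma psdmx_conj_diag n (A U : 'M[C]_n) j :
  psdmx A -> 0 <= (adj U *m A *m U) j j.
Proof.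
move=> psdA; rewrite -quad_form_delta.
by have := psdA (U *m delta_mx j 0); rewrite adjM !mulmxA.
Qed.

(* The eigenvalues produced by the spectral theorem are complex; positivity
   of the diagonal entries of U^* A U shows that they are real. *)
Lemma psdmx_eigdec n (A : 'M[C]_n) :
  adj A = A -> psdmx A -> exists Ud, eigdec A Ud.
Proof.
move=> hermA psdA.
have nA : A \is normalmx by apply/normalmxP; rewrite -adj_sesqui hermA.
have Puni := spectral_unitarymx A.
move/orthomx_spectralP: nA; rewrite invmx_unitary // -!adj_sesqui => Aeq.
set P := spectralmx A in Aeq Puni; set sp := spectral_diag A in Aeq.
have PP : P *m adj P = 1%:M by rewrite adj_sesqui; apply/unitarymxP.
exists (adj P, map_mx (@complex.Re R) sp); split => /=.
  by rewrite adjK; apply: mulmx1C.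
rewrite adjK {1}Aeq; congr (_ *m _ *m _); congr diag_mx.
apply/matrixP => i j; rewrite !mxE ord1 {i}.
have := psdmx_conj_diag (adj P) j psdA.
rewrite adjK {1}Aeq !mulmxA PP mul1mx -mulmxA PP mulmx1 mxE eqxx mulr1n.
by case: (sp 0 j) => a b; rewrite lecE /= => /andP[/eqP -> _].
Qed.

Lemma density_eigdec n (A : 'M[C]_n) : density A -> exists Ud, eigdec A Ud.
Proof. by case=> hermA psdA _; exact: psdmx_eigdec. Qed.

Lemma psdmx_eigval_ge0 n (A U : 'M[C]_n) d j : psdmx A -> eigdec A (U, d) ->
  0 <= d 0 j.
Proof.
move=> psdA eA; have := psdmx_conj_diag U j psdA.
by rewrite (eigdec_conj eA) !mxE eqxx mulr1n lecR.
Qed.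

Lemma trR_conj_diagf n (U : 'M[C]_n) d f : U *m adj U = 1%:M ->
  trR (U *m diagf f d *m adj U) = \sum_j f (d 0 j).
Proof.
move=> UU; rewrite /trR mxtrace_mulC mulmxA (mulmx1C UU) mul1mx mxtrace_diag.
by rewrite (raddf_sum Re); apply: eq_bigr => j _; rewrite mxE.
Qed.

Lemma eigdec_trR n (A U : 'M[C]_n) d : eigdec A (U, d) -> trR A = \sum_j d 0 j.
Proof. by case=> UU /= ->; exact: trR_conj_diagf. Qed.

Lemma trR_sum_conj_diag n (A U : 'M[C]_n) : U *m adj U = 1%:M ->
  \sum_j complex.Re ((adj U *m A *m U) j j) = trR A.
Proof.
move=> UU; rewrite /trR -(raddf_sum Re) -/(mxtrace _) mxtrace_mulC mulmxA.
by rewrite UU mul1mx.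
Qed.

Lemma trR_mul_conj_diagf n (A U : 'M[C]_n) d f : U *m adj U = 1%:M ->
  trR (A *m (U *m diagf f d *m adj U)) =
  \sum_j complex.Re ((adj U *m A *m U) j j) * f (d 0 j).
Proof.
move=> UU; rewrite /trR !mulmxA mxtrace_mulC !mulmxA mul_mx_diag /mxtrace.
rewrite (raddf_sum Re); apply: eq_bigr => j _; rewrite !mxE; exact: Re_mulr_real.
Qed.

Lemma supp_incl_eigval0 n (rho sigma V : 'M[C]_n) e j :
  supp_incl rho sigma -> eigdec sigma (V, e) -> e 0 j = 0 ->
  (adj V *m rho *m V) j j = 0.
Proof.
move=> /submxP [X ->] [/= VV ->] ej0.
rewrite !mulmxA -(mulmxA _ (adj V) V) (mulmx1C VV) mulmx1.
by rewrite mul_mx_diag !mxE ej0 mulr0.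
Qed.

End SpectralCalculus.

Section RealPowerSums.
Variable R : realType.

Definition ppow (t x : R) : R := if 0 < x then x `^ t else 0.

Definition plog (x : R) : R := if 0 < x then ln x else 0.

Definition powsum n (c x : 'I_n -> R) (t : R) : R := \sum_i c i * ppow t (x i).

Lemma ppow1 x : 0 <= x -> ppow 1 x = x.
Proof.
by rewrite /ppow le_eqVlt => /orP[/eqP <-|x0]; rewrite ?ltxx // x0 powRr1 // ltW.
Qed.

Lemma plog_ppow0 x : plog x * ppow 0 x = plog x.
Proof. by rewrite /plog /ppow; case: ifP; rewrite ?powRr0 ?mulr1 ?mulr0. Qed.

Lemma powsum1 n (x : 'I_n -> R) :
  (forall i, 0 <= x i) -> powsum (fun=> 1) x 1 = \sum_i x i.
Proof. by move=> x0; apply: eq_bigr => i _; rewrite mul1r ppow1. Qed.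

Lemma powsum0 n (c x : 'I_n -> R) : (forall i, 0 <= x i) ->
  (forall i, x i = 0 -> c i = 0) -> powsum c x 0 = \sum_i c i.
Proof.
move=> x0 cx; apply: eq_bigr => i _; rewrite /ppow.
case: ltP => xi; first by rewrite powRr0 mulr1.
by rewrite cx ?mulr0 //; apply/le_anti; rewrite xi x0.
Qed.

Lemma is_derive_ppow (t x : R) : is_derive t 1 (ppow^~ x) (plog x * ppow t x).
Proof.
rewrite /ppow /plog; case: ifP => x0; last first.
  by rewrite mul0r; apply: is_derive_cst.
have -> : (fun t => x `^ t) = expR \o ( *%R^~ (ln x)).
  by apply/funext => s; rewrite /= /powR gt_eqF.
have lin : is_derive t 1 ( *%R^~ (ln x)) (ln x).
  by apply: is_derive_eq; rewrite scaler0 add0r; exact: mulr1.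
rewrite /powR gt_eqF // mulrC.
exact: is_derive1_comp (is_derive_expR _) lin.
Qed.

Lemma is_derive_powsum n (c x : 'I_n -> R) (t : R) :
  is_derive t 1 (powsum c x) (\sum_i c i * (plog (x i) * ppow t (x i))).
Proof.
rewrite /powsum -(fct_sumE _ _ (fun i s => c i * ppow s (x i))).
apply: is_derive_sum => i.
by rewrite -[_ * (_ * _)]/(c i *: _); apply: is_deriveZ; apply: is_derive_ppow.
Qed.

Lemma powsum_continuous n (c x : 'I_n -> R) (t : R) :
  {for t, continuous (powsum c x)}.
Proof.
apply: differentiable_continuous; apply/derivable1_diffP.
by case: (is_derive_powsum c x t).
Qed.

End RealPowerSums.

Section RenyiLimit.
Variable R : realType.
Local Open Scope classical_set_scope.

Lemma cvg_difference_quotient (f : R -> R) (x a : R) :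
  is_derive x 1 f a -> f x = 0 -> (fun z => f z / (z - x)) @ x^' --> a.
Proof.
move=> /is_derive1_caratheodory [g [fE cg <-]] fx0.
have : g @ x^' --> g x by exact: cvg_within_filter.
apply: cvg_trans; apply: near_eq_cvg; near=> z.
rewrite -[f z]subr0 -fx0 fE mulfK // subr_eq0.
by near: z; exact: nbhs_dnbhs_neq.
Unshelve. all: by end_near. Qed.

Lemma cvg_ln_difference_quotient (f : R -> R) (x df : R) :
  is_derive x 1 f df -> f x = 1 -> (fun z => ln (f z) / (z - x)) @ x^' --> df.
Proof.
move=> fdf fx1; apply: (@cvg_difference_quotient (@ln R \o f)); last first.
  by rewrite /= fx1 ln1.
have lnd : is_derive (f x) 1 (@ln R) 1.
  by rewrite fx1 -[X in is_derive _ _ _ X]invr1; apply: is_derive1_ln.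
by rewrite -[df]mul1r; exact: is_derive1_comp lnd fdf.
Qed.

Lemma cvg_renyi_expression (F G H : R -> R) (dF dG : R) :
  is_derive (1 : R) 1 F dF -> is_derive (1 : R) 1 G dG ->
  {for 1, continuous H} ->
  F 1 = 1 -> G 1 = 1 -> H 1 = 1 ->
  (fun a => a / (1 - a) * ln (G a) - (1 - a)^-1 * ln (F a) + ln (H a))
    @ (1 : R)^' --> dF - dG.
Proof.
move=> Fd Gd Hc F1 G1 H1.
have qF := cvg_ln_difference_quotient Fd F1.
have qG := cvg_ln_difference_quotient Gd G1.
have lnH : (@ln R \o H) @ (1 : R)^' --> 0.
  rewrite -ln1 -[in X in ln X]H1; apply: cvg_within_filter.
  by apply: continuous_comp => //; apply: continuous_ln; rewrite H1.
have id1 : (fun a : R => a) @ (1 : R)^' --> (1 : R) by apply: cvg_within_filter.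
have := cvgD (cvgD (cvgN (cvgM id1 qG)) qF) lnH.
move=> /(_ (dnbhs_filter _) (dnbhs_filter _) (dnbhs_filter _) (dnbhs_filter _)).
rewrite mul1r addr0 [X in _ --> X]addrC => L.
apply: (cvg_trans _ L); apply: near_eq_cvg; apply: nearW => a.
rewrite !fctE /= -opprB invrN /GRing.scale /=; set q := (a - 1)^-1.
ring.
Qed.

Lemma cvg_classical_renyi n (d e w : 'I_n -> R) :
  (forall i, 0 <= d i) -> \sum_i d i = 1 ->
  (forall j, 0 <= e j) -> \sum_j e j = 1 ->
  \sum_j w j = 1 -> (forall j, e j = 0 -> w j = 0) ->
  (fun a => a / (1 - a) * ln (powsum w e (a - 1))
            - (1 - a)^-1 * ln (powsum (fun=> 1) d a)
            + ln (powsum (fun=> 1) e a))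
    @ (1 : R)^' --> \sum_i d i * plog (d i) - \sum_j w j * plog (e j).
Proof.
move=> d0 d1 e0 e1 w1 ew.
have shiftd : is_derive (1 : R) 1 (fun a => a - 1) 1 := is_derive_shift _ _ _.
apply: (@cvg_renyi_expression (powsum (fun=> 1) d) (fun a => powsum w e (a - 1))).
- apply: is_derive_eq (is_derive_powsum _ _ _) _.
  by apply: eq_bigr => i _; rewrite mul1r ppow1 // mulrC.
- have /is_derive_eq :=
    is_derive1_comp (x := 1) (is_derive_powsum w e (1 - 1)) shiftd.
  by apply; rewrite mulr1 subrr; apply: eq_bigr => j _; rewrite plog_ppow0.
- exact: powsum_continuous.
- by rewrite powsum1.
- by rewrite subrr powsum0.
- by rewrite powsum1.
Qed.

End RenyiLimit.

Local Open Scope classical_set_scope.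

Theorem lemma8 (R : realType) (n : nat) (rho sigma : 'M[R[i]]_n) :
  density rho -> density sigma ->
  (Salpha a rho sigma @[a --> (1 : R)^'] --> Umegaki rho sigma)%classic.
Proof.
move=> drho dsig; rewrite /Salpha /Umegaki.
case: ifP => supp; last exact: cvg_cst.
have [[_ psd_rho tr_rho] [_ psd_sig tr_sig]] := (drho, dsig).
have [[U d] [eU mfunU]] := mfun_eigdec (density_eigdec drho).
have [[V e] [eV mfunV]] := mfun_eigdec (density_eigdec dsig).
have [[UU _] [VV _]] := (eU, eV).
pose w j := complex.Re ((adj V *m rho *m V) j j).
have d1 : \sum_j d 0 j = 1 by rewrite -(eigdec_trR eU) /trR tr_rho.
have e1 : \sum_j e 0 j = 1 by rewrite -(eigdec_trR eV) /trR tr_sig.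
have w1 : \sum_j w j = 1 by rewrite trR_sum_conj_diag // /trR tr_rho.
have ew j : e 0 j = 0 -> w j = 0.
  by move=> ej0; rewrite /w (supp_incl_eigval0 supp eV ej0).
have := cvg_classical_renyi (fun j => psdmx_eigval_ge0 j psd_rho eU) d1
  (fun j => psdmx_eigval_ge0 j psd_sig eV) e1 w1 ew.
have -> : trR (rho *m mlog rho - rho *m mlog sigma) =
    \sum_j d 0 j * plog (d 0 j) - \sum_j w j * plog (e 0 j).
  rewrite trR_sub /mlog mfunU mfunV !trR_mul_conj_diagf // (eigdec_conj eU).
  by congr (_ - _); apply: eq_bigr => j _; rewrite /diagf !mxE eqxx mulr1n.
move=> L; apply/fine_cvgP; split; first exact: nearW.
apply: cvg_trans L; apply: near_eq_cvg; apply: nearW => a /=.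
rewrite /mpow !mfunU !mfunV /= !trR_conj_diagf // trR_mul_conj_diagf //.
by rewrite /powsum !(eq_bigr _ (fun i _ => mul1r _)).
Qed.
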